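(* Let $k$ be a positive integer and let $G$ be a finite, simple, undirected, connected graph of order at least $4$. (a) If $G$ has a twin equivalence class of cardinality at least $4$, then $O_{R,k}(G)=\mathcal{B}$ for all $k$. (b) If $G$ has two distinct twin equivalence classes of cardinality $3$, then $O_{R,k}(G)=\mathcal{B}$ for all $k$.
   Context: Two vertices $u,w$ of $G$ are twins if $N(u)-\{w\}=N(w)-\{u\}$, where $N(v)$ is the open neighborhood of $v$; this is an equivalence relation on $V(G)$ whose classes are the twin equivalence classes. $d(x,y)$ is the shortest-path distance and $d_k(x,y)=\min\{d(x,y),k+1\}$. A set $S\subseteq V(G)$ is a distance-$k$ resolving set if for all distinct $x,y$ some $z\in S$ has $d_k(x,z)\ne d_k(y,z)$. In the Maker-Breaker distance-$k$ resolving game on $G$, Maker and Breaker alternately select a not-yet-chosen vertex; Maker wins if his selected vertices form a distance-$k$ resolving set, Breaker wins otherwise. $O_{R,k}(G)=\mathcal{M}$ if Maker has a winning strategy whether he moves first or second, $\mathcal{B}$ if Breaker has a winning strategy whether she moves first or second, and $\mathcal{N}$ if the first player has a winning strategy. *)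

From mathcomp Require Import all_boot.
Set Implicit Arguments. Unset Strict Implicit. Unset Printing Implicit Defensive.

Section Graph.
Variables (T : finType) (e : rel T).

Definition nbhd (v : T) : {set T} := [set y | e v y].

Definition twins (u w : T) : bool := (nbhd u :\ w) == (nbhd w :\ u).

Definition twin_class (u : T) : {set T} := [set w | twins u w].

Fixpoint ball (n : nat) (x : T) : {set T} :=
  match n with
  | 0 => [set x]
  | n'.+1 => ball n' x :|: [set y | [exists z in ball n' x, e z y]]
  end.

(* shortest-path distance: least n with y in ball n x
   (for a connected graph this is < #|T|) *)
Definition dist (x y : T) : nat := find (fun n => y \in ball n x) (iota 0 #|T|).

Definition distk (k : nat) (x y : T) : nat := minn (dist x y) k.+1.

Definition resolving (k : nat) (S : {set T}) : bool :=
  [forall x, forall y, (x != y) ==> [exists z in S, distk k x z != distk k y z]].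

(* The game is played until every vertex is
   chosen; Maker wins iff his final set is distance-k resolving.  The fuel n
   bounds the number of remaining moves (#|T| suffices from the start). *)
Fixpoint maker_wins (k n : nat) (M B : {set T}) (makerTurn : bool) : bool :=
  match n with
  | 0 => resolving k M
  | n'.+1 =>
    let free := ~: (M :|: B) in
    if free == set0 then resolving k M
    else if makerTurn then [exists v in free, maker_wins k n' (v |: M) B false]
    else [forall v in free, maker_wins k n' M (v |: B) true]
  end.

Fixpoint breaker_wins (k n : nat) (M B : {set T}) (makerTurn : bool) : bool :=
  match n with
  | 0 => ~~ resolving k M
  | n'.+1 =>
    let free := ~: (M :|: B) in
    if free == set0 then ~~ resolving k M
    else if makerTurn then [forall v in free, breaker_wins k n' (v |: M) B false]
    else [exists v in free, breaker_wins k n' M (v |: B) true]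
  end.

Definition maker_wins_first k := maker_wins k #|T| set0 set0 true.
Definition maker_wins_second k := maker_wins k #|T| set0 set0 false.
Definition breaker_wins_first k := breaker_wins k #|T| set0 set0 false.
Definition breaker_wins_second k := breaker_wins k #|T| set0 set0 true.

End Graph.

Inductive outcome := Outcome_M | Outcome_B | Outcome_N | Outcome_P.

Definition outcome_Rk (T : finType) (e : rel T) (k : nat) : outcome :=
  if maker_wins_first e k && maker_wins_second e k then Outcome_M
  else if breaker_wins_first e k && breaker_wins_second e k then Outcome_B
  else if maker_wins_first e k && breaker_wins_first e k then Outcome_N
  else Outcome_P.

From mathcomp Require Import all_boot zify.
Set Implicit Arguments. Unset Strict Implicit. Unset Printing Implicit Defensive.

(* A vertex other than x and y is at the same distance from two twins x and y,
   so a distance-k resolving set contains all but at most one vertex of every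
   set of mutual twins, and Breaker wins once she holds two of them.  Measure
   her prospects in such a set C by its threat: the number of unclaimed
   vertices of C, plus 2 if Breaker already holds a vertex of C.  With Breaker
   to move, a threat of at least 3 wins: she either completes a pair of twins
   or raises the threat to at least 4.  A move of Maker lowers by at most one
   the threat of the sets containing his vertex, so a threat of at least 4 in
   one set, or of at least 3 in two disjoint sets, survives it.  A twin class
   of size at least 4, or two twin classes of size 3, provide these situations
   at the start, whoever moves first. *)

Section Twins.
Variables (T : finType) (e : rel T).

Lemma twinsC x y : twins e x y = twins e y x.
Proof. by rewrite /twins eq_sym. Qed.

Lemma twins_edge x y z : twins e x y -> z != x -> z != y -> e x z = e y z.
Proof. by move=> /eqP/setP/(_ z); rewrite !inE => + zx zy; rewrite zx zy. Qed.

Lemma ball_center n x : x \in ball e n x.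
Proof. by elim: n => [|n IHn] /=; rewrite ?inE ?IHn. Qed.

Lemma ball_twins n x y z : twins e x y -> z != x -> z != y ->
  (z \in ball e n x) = (z \in ball e n y).
Proof.
wlog suff: x y / twins e x y -> z != x -> z != y ->
                 z \in ball e n x -> z \in ball e n y.
  by move=> sub txy zx zy; apply/idP/idP; apply: sub; rewrite // twinsC.
move=> txy; elim: n z => [|n IHn] z zx zy /=; first by rewrite !inE (negbTE zx).
rewrite !inE => /orP[/IHn -> // | /existsP[w /andP[bw ewz]]].
apply/orP; right; apply/existsP.
have [wx_eq | nwx] := eqVneq w x.
  by exists y; rewrite ball_center -(twins_edge txy zx zy) -wx_eq.
have [wy_eq | nwy] := eqVneq w y; first by exists y; rewrite ball_center -wy_eq.
by exists w; rewrite ewz IHn.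
Qed.

Lemma dist_twins x y z : twins e x y -> z != x -> z != y ->
  dist e x z = dist e y z.
Proof. by move=> txy zx zy; apply: eq_find => n; apply: ball_twins. Qed.

Lemma resolving_twins k M x y : resolving e k M -> x != y -> twins e x y ->
  (x \in M) || (y \in M).
Proof.
move=> /forallP/(_ x)/forallP/(_ y)/implyP + xy txy.
move=> /(_ xy)/existsP[z /andP[zM]].
have [<- | zx] := eqVneq z x; first by rewrite zM.
have [<- | zy] := eqVneq z y; first by rewrite zM orbT.
by rewrite /distk (dist_twins txy) ?eqxx.
Qed.

Definition twin_set (C : {set T}) :=
  forall a b, a \in C -> b \in C -> twins e a b.

Hypotheses (e_sym : symmetric e) (e_irr : irreflexive e).

Lemma twinsP x y :
  reflect (forall z, z != x -> z != y -> e x z = e y z) (twins e x y).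
Proof.
apply: (iffP idP) => [txy z | same]; first exact: twins_edge.
apply/eqP/setP => z; rewrite !inE.
have [-> | zx] := eqVneq z x; first by rewrite e_irr andbF.
have [-> | zy] := eqVneq z y; first by rewrite e_irr andbF.
by rewrite same.
Qed.

Lemma twins_trans u a b : twins e u a -> twins e u b -> twins e a b.
Proof.
move=> /twinsP tua /twinsP tub; apply/twinsP => z.
have [-> ua ub | zu za zb] := eqVneq z u; last by rewrite -tua // tub.
have [-> // | ab] := eqVneq a b.
have eba : e u a = e b a by apply: tub; rewrite // eq_sym.
have eab : e u b = e a b by apply: tua; rewrite // eq_sym.
by rewrite e_sym eba e_sym -eab e_sym.
Qed.

Lemma twin_class_twin_set u : twin_set (twin_class e u).
Proof. by move=> a b; rewrite !inE; apply: twins_trans. Qed.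

Lemma twin_classE u x : x \in twin_class e u -> twin_class e x = twin_class e u.
Proof.
rewrite inE => tux; apply/setP => w; rewrite !inE.
by apply/idP/idP; [apply: twins_trans; rewrite twinsC | apply: twins_trans].
Qed.

Lemma twin_class_disjoint u v :
  twin_class e u != twin_class e v -> [disjoint twin_class e u & twin_class e v].
Proof.
move=> neq_uv; apply/pred0P => x /=; apply/negbTE/andP => -[xu xv].
by move/eqP: neq_uv; apply; rewrite -(twin_classE xu) (twin_classE xv).
Qed.

End Twins.

Section Game.
Variables (T : finType) (e : rel T) (k : nat).
Implicit Types (M B C : {set T}) (v : T).

Definition unclaimed M B : {set T} := ~: (M :|: B).

Lemma unclaimed_makerU1 M B v : unclaimed (v |: M) B = unclaimed M B :\ v.
Proof. by apply/setP => z; rewrite !inE; case: eqP. Qed.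

Lemma unclaimed_breakerU1 M B v : unclaimed M (v |: B) = unclaimed M B :\ v.
Proof. by apply/setP => z; rewrite !inE; case: eqP; rewrite ?orbT. Qed.

Lemma breaker_winsE n M B t :
  breaker_wins e k n M B t = ~~ maker_wins e k n M B t.
Proof.
elim: n M B t => [//|n IHn] M B [] /=; case: ifP => // _.
  by rewrite negb_exists; apply: eq_forallb => v; rewrite IHn; case: (v \in _).
by rewrite negb_forall; apply: eq_existsb => v; rewrite IHn; case: (v \in _).
Qed.

Lemma outcome_Rk_B :
  breaker_wins_first e k -> breaker_wins_second e k ->
  outcome_Rk e k = Outcome_B.
Proof.
rewrite /outcome_Rk /breaker_wins_second breaker_winsE => -> /negbTE.
by rewrite /maker_wins_first => ->.
Qed.

Definition breaker_owns_twins M B :=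
  exists x y, [/\ x != y, twins e x y, x \in B :\: M & y \in B :\: M].

Lemma not_resolving_twins M x y :
  x != y -> twins e x y -> x \notin M -> y \notin M -> ~~ resolving e k M.
Proof.
move=> xy txy xM yM; apply/negP => /resolving_twins/(_ xy txy).
by rewrite (negbTE xM) (negbTE yM).
Qed.

Lemma breaker_owns_twins_wins n M B t :
  breaker_owns_twins M B -> breaker_wins e k n M B t.
Proof.
move=> [x [y [xy txy]]]; elim: n M B t => [|n IHn] M B t /=;
  rewrite !inE => /andP[xM xB] /andP[yM yB].
  exact: not_resolving_twins xy txy xM yM.
case: ifP => [_ | /negbT/set0Pn[w wfree]].
  exact: not_resolving_twins xy txy xM yM.
case: t.
  apply/forall_inP => v; rewrite !inE negb_or => /andP[vM vB].
  have [xv yv] : x != v /\ y != v by split; apply: contraNneq vB => <-.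
  by apply: IHn; rewrite !inE negb_or ?xv ?yv ?xM ?yM.
apply/exists_inP; exists w => //.
by apply: IHn; rewrite !inE ?xM ?yM ?xB ?yB ?orbT.
Qed.

Section BreakerStrategy.
Variables PM PB : {set T} -> {set T} -> Prop.
Hypothesis maker_can_move : forall M B, PM M B -> unclaimed M B != set0.
Hypothesis maker_move : forall M B v,
  PM M B -> v \in unclaimed M B -> PB (v |: M) B.
Hypothesis breaker_move : forall M B, PB M B ->
  exists2 v, v \in unclaimed M B &
    breaker_owns_twins M (v |: B) \/ PM M (v |: B).

Lemma breaker_strategy_wins n M B : #|unclaimed M B| <= n ->
  (PM M B -> breaker_wins e k n M B true) /\
  (PB M B -> breaker_wins e k n M B false).
Proof.
elim: n M B => [|n IHn] M B.
  rewrite leqn0 cards_eq0 => /eqP free0.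
  by split=> [/maker_can_move | /breaker_move[v]]; rewrite free0 ?eqxx ?inE.
move=> small.
have small_del v : v \in unclaimed M B -> #|unclaimed M B :\ v| <= n.
  by move=> vfree; move: small; rewrite (cardsD1 v) vfree.
split=> [PMB | PBB] /=; rewrite -/(unclaimed M B).
  rewrite (negbTE (maker_can_move PMB)); apply/forall_inP => v vfree.
  apply: (IHn _ _ _).2; last exact: maker_move.
  by rewrite unclaimed_makerU1 small_del.
have [v vfree reply] := breaker_move PBB.
case: ifP => [/eqP free0 | _]; first by move: vfree; rewrite free0 inE.
apply/exists_inP; exists v => //; case: reply => [owns | PMv].
  exact: breaker_owns_twins_wins.
by apply: (IHn _ _ _).1; rewrite ?unclaimed_breakerU1 ?small_del.
Qed.

Lemma breaker_strategy_outcome_Rk_B :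
  PM set0 set0 -> PB set0 set0 -> outcome_Rk e k = Outcome_B.
Proof.
have [wins_second wins_first] :=
  breaker_strategy_wins (max_card (unclaimed set0 set0)).
by move=> PM0 PB0; apply: outcome_Rk_B; [exact: wins_first | exact: wins_second].
Qed.

End BreakerStrategy.

Definition breaker_holds C M B : bool :=
  [exists x in C, (x \in B) && (x \notin M)].

Definition threat C M B : nat :=
  #|C :&: unclaimed M B| + (breaker_holds C M B).*2.

Lemma threat0 C : threat C set0 set0 = #|C|.
Proof.
rewrite /threat.
have -> : breaker_holds C set0 set0 = false.
  by apply/exists_inP => -[x _]; rewrite inE.
by rewrite /unclaimed setU0 setC0 setIT addn0.
Qed.

Lemma card_unclaimedD1 C M B v :
  #|C :&: unclaimed M B| =
    (v \in C :&: unclaimed M B) + #|C :&: (unclaimed M B :\ v)|.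
Proof. by rewrite setIDA (cardsD1 v). Qed.

Lemma breaker_holds_makerU1 C M B v :
  v \in unclaimed M B -> breaker_holds C (v |: M) B = breaker_holds C M B.
Proof.
rewrite !inE negb_or => /andP[_ vB]; apply: eq_existsb => x; rewrite !inE.
by case: eqP => // ->; rewrite (negbTE vB) !andbF.
Qed.

Lemma threat_makerU1 C M B v :
  v \in unclaimed M B -> threat C M B <= (threat C (v |: M) B).+1.
Proof.
move=> vfree; rewrite /threat unclaimed_makerU1 breaker_holds_makerU1 //.
by rewrite (card_unclaimedD1 C M B v); case: (v \in _).
Qed.

Lemma threat_makerU1_notin C M B v :
  v \in unclaimed M B -> v \notin C -> threat C (v |: M) B = threat C M B.
Proof.
move=> vfree vC; rewrite /threat unclaimed_makerU1 breaker_holds_makerU1 //.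
by rewrite (card_unclaimedD1 C M B v) inE (negbTE vC).
Qed.

Lemma threat_unclaimed C M B :
  3 <= threat C M B -> exists2 v, v \in C & v \in unclaimed M B.
Proof.
move=> C3; have /card_gt0P[v] : 0 < #|C :&: unclaimed M B|.
  by move: C3; rewrite /threat; case: breaker_holds => /=; lia.
by rewrite inE => /andP[]; exists v.
Qed.

Lemma threat_breaker_move C M B : twin_set e C -> 3 <= threat C M B ->
  exists2 v, v \in unclaimed M B &
    breaker_owns_twins M (v |: B) \/ 4 <= threat C M (v |: B).
Proof.
move=> twC C3; have [v vC vfree] := threat_unclaimed C3; exists v => //.
have := vfree; rewrite !inE negb_or => /andP[vM vB].
case holds: (breaker_holds C M B).
  have [x xC /andP[xB xM]] := exists_inP holds.
  left; exists x, v; split; rewrite ?twC ?inE ?eqxx ?xB ?xM ?vM ?orbT //.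
  by apply: contraNneq vB => <-.
right; move: C3; rewrite /threat holds unclaimed_breakerU1.
have -> : breaker_holds C M (v |: B).
  by apply/exists_inP; exists v; rewrite ?inE ?eqxx.
by rewrite (card_unclaimedD1 C M B v) inE vC vfree /=; lia.
Qed.

Definition breaker_threat M B := exists2 C, twin_set e C & 3 <= threat C M B.

Definition maker_threat M B :=
  (exists2 C, twin_set e C & 4 <= threat C M B) \/
  exists C1 C2, [/\ twin_set e C1, twin_set e C2, [disjoint C1 & C2],
                    3 <= threat C1 M B & 3 <= threat C2 M B].

Lemma maker_threat_breaker_threat M B : maker_threat M B -> breaker_threat M B.
Proof.
by case=> [[C twC /ltnW] | [C1 [_ [twC _ _ C3 _]]]]; [exists C | exists C1].
Qed.

Lemma maker_threat_unclaimed M B : maker_threat M B -> unclaimed M B != set0.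
Proof.
move=> /maker_threat_breaker_threat[C _ /threat_unclaimed[v _ vfree]].
by apply/set0Pn; exists v.
Qed.

Lemma maker_threat_move M B v :
  maker_threat M B -> v \in unclaimed M B -> breaker_threat (v |: M) B.
Proof.
move=> [[C twC C4] | [C1 [C2 [tw1 tw2 dis C13 C23]]]] vfree.
  by exists C => //; have := threat_makerU1 C vfree; lia.
have [vC1 | vC1] := boolP (v \in C1).
  by exists C2; rewrite // threat_makerU1_notin // (disjointFr dis vC1).
by exists C1; rewrite // threat_makerU1_notin.
Qed.

Lemma breaker_threat_move M B : breaker_threat M B ->
  exists2 v, v \in unclaimed M B &
    breaker_owns_twins M (v |: B) \/ maker_threat M (v |: B).
Proof.
move=> [C twC C3]; have [v vfree reply] := threat_breaker_move twC C3.
by exists v => //; case: reply => [| C4]; [left | right; left; exists C].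
Qed.

Lemma twin_sets_outcome_Rk_B :
  (exists2 C, twin_set e C & 4 <= #|C|) \/
  (exists C1 C2, [/\ twin_set e C1, twin_set e C2, [disjoint C1 & C2],
                     3 <= #|C1| & 3 <= #|C2|]) ->
  outcome_Rk e k = Outcome_B.
Proof.
move=> start; have PM0 : maker_threat set0 set0.
  case: start => [[C twC C4] | [C1 [C2 [tw1 tw2 dis C13 C23]]]].
    by left; exists C; rewrite ?threat0.
  by right; exists C1, C2; rewrite !threat0.
exact: (breaker_strategy_outcome_Rk_B maker_threat_unclaimed maker_threat_move
          breaker_threat_move PM0 (maker_threat_breaker_threat PM0)).
Qed.

End Game.

Theorem corollary2p8 (T : finType) (e : rel T) (k : nat) :
  0 < k ->
  symmetric e -> irreflexive e ->
  (forall x y : T, connect e x y) ->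
  4 <= #|T| ->
  ((exists u : T, 4 <= #|twin_class e u|) -> outcome_Rk e k = Outcome_B) /\
  ((exists u v : T, twin_class e u != twin_class e v /\
       #|twin_class e u| = 3 /\ #|twin_class e v| = 3) ->
     outcome_Rk e k = Outcome_B).
Proof.
move=> _ e_sym e_irr _ _; split=> [[u u4] | [u [v [uv [u3 v3]]]]];
  apply: twin_sets_outcome_Rk_B.
  by left; exists (twin_class e u); first exact: twin_class_twin_set.
right; exists (twin_class e u), (twin_class e v).
by split; rewrite ?u3 ?v3 ?twin_class_disjoint //; apply: twin_class_twin_set.
Qed.
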